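(* Let $S=\operatorname{FInv}\langle X\mid R\rangle$ be the $F$-inverse monoid presented by generators $X$ and a symmetric relation $R\subseteq\mathbb{I}\mathfrak{m}_X\times\mathbb{I}\mathfrak{m}_X$, and let $G$ be its greatest group image. Then the closure operators $c_R$ and $c_S$ on $\operatorname{Sub}\Gamma_X$ coincide.
   Context: $F$-inverse monoids (inverse monoids in which each $\sigma$-class has a greatest element $s^{\mathfrak m}$) form a variety in signature $(\cdot,1,{}^{-1},{}^{\mathfrak m})$; $\operatorname{FInv}\langle X\mid R\rangle$ is the quotient of the free $F$-inverse monoid on $X$ by the congruence generated by $R$, $X$-generated via the images of $X$. $\mathbb{I}\mathfrak{m}_X$ is the set of terms $u_0v_1^{\mathfrak m}u_1\cdots v_n^{\mathfrak m}u_n$ ($u_i,v_i\in(X\cup X^{-1})^*$); $w_S$, $w_G$ denote values. $\Gamma_X$ is the Cayley graph of $G$ (vertices $G$, edge labeled $x$ from $g$ to $gx_G$, $x\in X\cup X^{-1}$, with inverse edges) and $\operatorname{Sub}\Gamma_X$ its lattice of subgraphs (closed under endpoints and inverse edges). The journey labeled $w$ from $g$ is $(g\overline{u_0},g(u_0v_1)_G\overline{u_1},\dots,g(u_0v_1\cdots u_{n-1}v_n)_G\overline{u_n})$, where $h\overline u$ is the path from $h$ labeled by the word $u$; $w$ labels a journey in $\Delta$ from $g$ to $h$ if $gw_G=h$ and all these paths lie in $\Delta$. For a symmetric relation $Q$ on $\mathbb{I}\mathfrak{m}_X$ whose pairs are equal in $G$, $c_Q$ is the closure operator on $\operatorname{Sub}\Gamma_X$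 whose closed graphs are those $\Delta$ such that for all $(u,v)\in Q$ and $g,h\in V(\Delta)$, $u$ labels a journey in $\Delta$ from $g$ to $h$ iff $v$ does ($\Delta^{c_Q}$ is the intersection of closed graphs containing $\Delta$); $c_S=c_Q$ for $Q=\{(u,v):u_S=v_S\}$. *)

From Stdlib Require Import List.
Import ListNotations.
Set Implicit Arguments.

Record FInvMonoid := {
  fcar :> Type;
  fmul : fcar -> fcar -> fcar;
  fone : fcar;
  finv : fcar -> fcar;
  fm   : fcar -> fcar;
  fmulA : forall x y z, fmul x (fmul y z) = fmul (fmul x y) z;
  fmul1l : forall x, fmul fone x = x;
  fmul1r : forall x, fmul x fone = x;
  finv_l : forall x, fmul (fmul x (finv x)) x = x;
  finv_r : forall x, fmul (fmul (finv x) x) (finv x) = finv x;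
  fidem_comm : forall e f, fmul e e = e -> fmul f f = f -> fmul e f = fmul f e;
  (* fm s lies in the sigma-class of s ... *)
  fm_sigma : forall s, exists e, fmul e e = e /\ fmul e (fm s) = fmul e s;
  (* ... and is the greatest element of it w.r.t. the natural partial order
     (t <= u iff t = e u for some idempotent e) *)
  fm_max : forall s t, (exists e, fmul e e = e /\ fmul e t = fmul e s) ->
                       exists e, fmul e e = e /\ t = fmul e (fm s)
}.

Inductive term (X : Type) : Type :=
  | TVar : X -> term X
  | TOne : term X
  | TMul : term X -> term X -> term X
  | TInv : term X -> term X
  | TM   : term X -> term X.
Arguments TOne {X}.

(* letters of X u X^{-1}: (x, false) = x, (x, true) = x^{-1} *)
Definition letter (X : Type) := (X * bool)%type.
Definition word (X : Type) := list (letter X).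

Definition letter_inv X (a : letter X) : letter X := (fst a, negb (snd a)).

Definition lterm X (a : letter X) : term X :=
  if snd a then TInv (TVar (fst a)) else TVar (fst a).

Fixpoint wterm X (u : word X) : term X :=
  match u with
  | [] => TOne
  | a :: u' => TMul (lterm a) (wterm u')
  end.

(* an element u0 v1^m u1 ... vn^m un of Im_X, given as (u0, [(v1,u1);...;(vn,un)]) *)
Definition imterm (X : Type) := (word X * list (word X * word X))%type.

Fixpoint imterm_aux X (u0 : word X) (l : list (word X * word X)) : term X :=
  match l with
  | [] => wterm u0
  | (v, u) :: l' => TMul (wterm u0) (TMul (TM (wterm v)) (imterm_aux u l'))
  end.

Definition imt X (w : imterm X) : term X := imterm_aux (fst w) (snd w).

Fixpoint eval {X : Type} {M : FInvMonoid} (phi : X -> M) (t : term X) : M :=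
  match t with
  | TVar x => phi x
  | TOne => fone M
  | TMul t1 t2 => fmul M (eval phi t1) (eval phi t2)
  | TInv t1 => finv M (eval phi t1)
  | TM t1 => fm M (eval phi t1)
  end.

(** * Equality in S = FInv<X | R>: the quotient of the free F-inverse monoid
    by the congruence generated by R, i.e. equality under every R-satisfying
    assignment into every F-inverse monoid. *)
Definition eqS X (R : imterm X -> imterm X -> Prop) (t1 t2 : term X) : Prop :=
  forall (M : FInvMonoid) (phi : X -> M),
    (forall p q, R p q -> eval phi (imt p) = eval phi (imt q)) ->
    eval phi t1 = eval phi t2.

(** * Equality in the greatest group image G = S / sigma:
    s sigma t iff e s = e t for some idempotent e of S. *)
Definition eqG X (R : imterm X -> imterm X -> Prop) (t1 t2 : term X) : Prop :=
  exists e : term X, eqS R (TMul e e) e /\ eqS R (TMul e t1) (TMul e t2).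

(** * Subgraphs of the Cayley graph Gamma_X of G.
    Vertices of G are represented by terms modulo eqG; the edge labelled
    a in X u X^{-1} starting at g is represented by (g, a) and ends at g a_G. *)
Record graph (X : Type) := {
  gV : term X -> Prop;
  gE : term X -> letter X -> Prop
}.

Definition is_subgraph X (R : imterm X -> imterm X -> Prop) (D : graph X) : Prop :=
  (forall g h, eqG R g h -> gV D g -> gV D h) /\
  (forall g h a, eqG R g h -> gE D g a -> gE D h a) /\
  (forall g a, gE D g a -> gV D g /\ gV D (TMul g (lterm a))) /\
  (forall g a, gE D g a -> gE D (TMul g (lterm a)) (letter_inv a)).

Definition subgraph_le X (D1 D2 : graph X) : Prop :=
  (forall g, gV D1 g -> gV D2 g) /\ (forall g a, gE D1 g a -> gE D2 g a).

Fixpoint path_in X (D : graph X) (h : term X) (u : word X) : Prop :=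
  match u with
  | [] => gV D h
  | a :: u' => gE D h a /\ path_in D (TMul h (lterm a)) u'
  end.

Fixpoint journey_paths X (D : graph X) (g : term X) (u0 : word X)
    (l : list (word X * word X)) : Prop :=
  match l with
  | [] => path_in D g u0
  | (v, u) :: l' =>
      path_in D g u0 /\ journey_paths D (TMul (TMul g (wterm u0)) (wterm v)) u l'
  end.

Definition labels_journey X (R : imterm X -> imterm X -> Prop) (D : graph X)
    (w : imterm X) (g h : term X) : Prop :=
  eqG R (TMul g (imt w)) h /\ journey_paths D g (fst w) (snd w).

Definition cQ_closed X (R : imterm X -> imterm X -> Prop)
    (Q : imterm X -> imterm X -> Prop) (D : graph X) : Prop :=
  forall u v, Q u v -> forall g h, gV D g -> gV D h ->
    (labels_journey R D u g h <-> labels_journey R D v g h).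

Definition cQ_closure X (R : imterm X -> imterm X -> Prop)
    (Q : imterm X -> imterm X -> Prop) (D : graph X) : graph X :=
  {| gV := fun g => forall D', is_subgraph R D' -> cQ_closed R Q D' ->
                      subgraph_le D D' -> gV D' g;
     gE := fun g a => forall D', is_subgraph R D' -> cQ_closed R Q D' ->
                      subgraph_le D D' -> gE D' g a |}.

Definition QS X (R : imterm X -> imterm X -> Prop) (u v : imterm X) : Prop :=
  eqS R (imt u) (imt v).

Definition same_graph X (D1 D2 : graph X) : Prop :=
  (forall g, gV D1 g <-> gV D2 g) /\ (forall g a, gE D1 g a <-> gE D2 g a).

(* Every c_S-closed graph is c_R-closed since R is contained in Q_S.  Conversely, the pairs
   (Δ, g) with Δ a c_R-closed subgraph containing 1 and g, multiplied by
   (Δ, g)(Δ', h) = ((Δ ∪ gΔ')^{c_R}, gh), form an F-inverse monoid (the inverse of (Δ, g) is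
   (g⁻¹Δ, g⁻¹), and (Δ, g)^m is the closure of {1, g}).  Sending x to its edge from 1, a
   term w of Im_X evaluates to a pair (Δ_w, w_G) such that gΔ_w ⊆ Δ exactly when w labels a
   journey in Δ from g.  Since c_R-closed graphs do not distinguish R-related journeys, this
   monoid satisfies the relations R, hence every equation u_S = v_S; therefore c_R-closed
   graphs do not distinguish Q_S-related journeys either, and the two closure operators have
   the same closed graphs. *)

From Stdlib Require Import Setoid Morphisms FunctionalExtensionality PropExtensionality ProofIrrelevance.
Set Implicit Arguments.

Section InverseMonoid.
Variable M : FInvMonoid.
Local Infix "·" := (fmul M) (at level 40, left associativity).
Local Notation "x ⁻¹" := (finv M x) (at level 9, format "x ⁻¹").

Lemma fmul_inv_r_idem (x : M) : x · x⁻¹ · (x · x⁻¹) = x · x⁻¹.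
Proof. rewrite fmulA, finv_l; reflexivity. Qed.

Lemma fmul_inv_l_idem (x : M) : x⁻¹ · x · (x⁻¹ · x) = x⁻¹ · x.
Proof. rewrite fmulA, finv_r; reflexivity. Qed.

Lemma fmul_conj_idem (g e z : M) : e · e = e -> g · e · g⁻¹ · (g · z) = g · (e · z).
Proof.
  intro Ie.
  assert (C : e · (g⁻¹ · g) = g⁻¹ · g · e)
    by (apply fidem_comm; auto using fmul_inv_l_idem).
  rewrite <- !fmulA, (fmulA M g⁻¹ g z), (fmulA M e (g⁻¹ · g) z), C,
    <- (fmulA M (g⁻¹ · g) e z), (fmulA M g (g⁻¹ · g)), (fmulA M g g⁻¹ g), finv_l.
  reflexivity.
Qed.

Lemma conj_idem (g e : M) : e · e = e -> g · e · g⁻¹ · (g · e · g⁻¹) = g · e · g⁻¹.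
Proof.
  intro Ie. rewrite <- (fmulA M g e g⁻¹) at 2. rewrite fmul_conj_idem by exact Ie.
  rewrite (fmulA M e e), Ie, !fmulA; reflexivity.
Qed.

(* With [s = f · fm s] for an idempotent [f] (maximality of [fm s]), the idempotent
   [e = s · s⁻¹] satisfies [f · e = e], hence [e · fm s = e · f · fm s = e · s = s]. *)
Lemma fmul_inv_fm (s : M) : s · s⁻¹ · fm M s = s.
Proof.
  destruct (fm_max M s s) as [f [If Hs]].
  { exists (fone M). split; [apply fmul1l | reflexivity]. }
  set (m := fm M s) in *. set (e := s · s⁻¹).
  assert (Ie : e · e = e) by apply fmul_inv_r_idem.
  assert (Hfe : f · e = e).
  { unfold e. rewrite Hs at 1 3. rewrite <- !fmulA, (fmulA M f f), If. reflexivity. }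
  rewrite <- Hfe, (fidem_comm M If Ie), <- fmulA, <- Hs. unfold e. apply finv_l.
Qed.

End InverseMonoid.

Section GroupImage.
Variables (X : Type) (R : imterm X -> imterm X -> Prop).

Lemma eqS_eqG (t1 t2 : term X) : eqS R t1 t2 -> eqG R t1 t2.
Proof.
  intro H. exists TOne. split; intros M phi HR; simpl.
  - apply fmul1l.
  - rewrite (H M phi HR). reflexivity.
Qed.

Lemma R_eqS (u v : imterm X) : R u v -> eqS R (imt u) (imt v).
Proof. intros H M phi HR. apply HR, H. Qed.

Lemma eqG_trans (t1 t2 t3 : term X) : eqG R t1 t2 -> eqG R t2 t3 -> eqG R t1 t3.
Proof.
  intros [e1 [I1 H1]] [e2 [I2 H2]]. exists (TMul e1 e2).
  split; intros M phi HR; specialize (I1 M phi HR); specialize (I2 M phi HR);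
    specialize (H1 M phi HR); specialize (H2 M phi HR); simpl in *;
    set (a := eval phi e1) in *; set (b := eval phi e2) in *;
    assert (C : fmul M a b = fmul M b a) by (apply fidem_comm; auto).
  - rewrite <- fmulA, (fmulA M b a b), <- C, <- fmulA, I2, fmulA, I1. reflexivity.
  - rewrite C, <- !fmulA, H1, !fmulA, <- C, <- !fmulA, H2. reflexivity.
Qed.

#[global] Instance eqG_Equivalence : Equivalence (eqG R).
Proof.
  split.
  - intro t. apply eqS_eqG. intros M phi _. reflexivity.
  - intros t1 t2 [e [I H]]. exists e. split; [exact I|].
    intros M phi HR. symmetry. apply H, HR.
  - exact eqG_trans.
Qed.

Lemma eqG_mulr (s t k : term X) : eqG R s t -> eqG R (TMul s k) (TMul t k).
Proof.
  intros [e [I H]]. exists e. split; [exact I|]. intros M phi HR. simpl.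
  rewrite !fmulA. specialize (H M phi HR). simpl in H. rewrite H. reflexivity.
Qed.

(* If [e] witnesses [s ~ t], its conjugate [k e k⁻¹] witnesses [k s ~ k t]. *)
Lemma eqG_mull (s t k : term X) : eqG R s t -> eqG R (TMul k s) (TMul k t).
Proof.
  intros [e [I H]]. exists (TMul (TMul k e) (TInv k)).
  split; intros M phi HR; specialize (I M phi HR); simpl in *.
  - apply conj_idem, I.
  - specialize (H M phi HR). simpl in H. rewrite !fmul_conj_idem by exact I.
    rewrite H. reflexivity.
Qed.

#[global] Instance TMul_proper : Proper (eqG R ==> eqG R ==> eqG R) (@TMul X).
Proof.
  intros a b Hab c d Hcd. transitivity (TMul b c); [apply eqG_mulr | apply eqG_mull]; assumption.
Qed.

Lemma eqG_mulA (a b c : term X) : eqG R (TMul (TMul a b) c) (TMul a (TMul b c)).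
Proof. apply eqS_eqG. intros M phi _. symmetry. apply fmulA. Qed.

Lemma eqG_mul1l (a : term X) : eqG R (TMul TOne a) a.
Proof. apply eqS_eqG. intros M phi _. apply fmul1l. Qed.

Lemma eqG_mul1r (a : term X) : eqG R (TMul a TOne) a.
Proof. apply eqS_eqG. intros M phi _. apply fmul1r. Qed.

Lemma eqG_mulVr (a : term X) : eqG R (TMul a (TInv a)) TOne.
Proof.
  exists (TMul a (TInv a)). split; intros M phi _; simpl.
  - apply fmul_inv_r_idem.
  - rewrite fmul1r. apply fmul_inv_r_idem.
Qed.

Lemma eqG_mulVl (a : term X) : eqG R (TMul (TInv a) a) TOne.
Proof.
  exists (TMul (TInv a) a). split; intros M phi _; simpl.
  - apply fmul_inv_l_idem.
  - rewrite fmul1r. apply fmul_inv_l_idem.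
Qed.

Lemma eqG_mulK (a b : term X) : eqG R (TMul (TInv a) (TMul a b)) b.
Proof. rewrite <- eqG_mulA, eqG_mulVl, eqG_mul1l. reflexivity. Qed.

Lemma eqG_mulVK (a b : term X) : eqG R (TMul a (TMul (TInv a) b)) b.
Proof. rewrite <- eqG_mulA, eqG_mulVr, eqG_mul1l. reflexivity. Qed.

Lemma eqG_mulI (g a b : term X) : eqG R (TMul g a) (TMul g b) -> eqG R a b.
Proof. intro H. rewrite <- (eqG_mulK g a), H. apply eqG_mulK. Qed.

#[global] Instance TInv_proper : Proper (eqG R ==> eqG R) (@TInv X).
Proof.
  intros a b H. apply eqG_mulI with a.
  rewrite eqG_mulVr, H, eqG_mulVr. reflexivity.
Qed.

Lemma eqG_fm (t : term X) : eqG R (TM t) t.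
Proof.
  exists (TMul t (TInv t)). split; intros M phi _; simpl.
  - apply fmul_inv_r_idem.
  - rewrite fmul_inv_fm. symmetry. apply finv_l.
Qed.

Lemma eqG_ext (k k' : term X) : eqG R k k' -> eqG R k = eqG R k'.
Proof.
  intro H. extensionality z. apply propositional_extensionality. rewrite H. reflexivity.
Qed.

End GroupImage.

Ltac group_simpl :=
  repeat (rewrite ?eqG_mulA, ?eqG_mul1l, ?eqG_mul1r, ?eqG_mulK, ?eqG_mulVK,
            ?eqG_mulVr, ?eqG_mulVl;
          repeat match goal with H : eqG _ _ TOne |- _ => progress rewrite H end).

Section Subgraphs.
Variables (X : Type) (R : imterm X -> imterm X -> Prop).

Lemma subgraph_le_refl (A : graph X) : subgraph_le A A.
Proof. split; auto. Qed.

Lemma subgraph_le_trans (A B C : graph X) :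
  subgraph_le A B -> subgraph_le B C -> subgraph_le A C.
Proof. intros [H1 H2] [H3 H4]; split; auto. Qed.

Lemma subgraph_le_antisym (A B : graph X) : subgraph_le A B -> subgraph_le B A -> A = B.
Proof.
  destruct A as [VA EA], B as [VB EB]. intros [H1 H2] [H3 H4]; simpl in *.
  assert (VA = VB) by (extensionality g; apply propositional_extensionality; split; auto).
  assert (EA = EB)
    by (extensionality g; extensionality a; apply propositional_extensionality; split; auto).
  subst; reflexivity.
Qed.

Lemma path_in_mono (D1 D2 : graph X) (g : term X) (u : word X) :
  subgraph_le D1 D2 -> path_in D1 g u -> path_in D2 g u.
Proof.
  intros [HV HE]. revert g; induction u as [|a u IH]; simpl; intros g H; auto.
  destruct H; split; auto.
Qed.

Lemma journey_paths_mono (D1 D2 : graph X) l (g : term X) (u0 : word X) :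
  subgraph_le D1 D2 -> journey_paths D1 g u0 l -> journey_paths D2 g u0 l.
Proof.
  intro Hle. revert g u0; induction l as [|[v u] l IH]; simpl; intros g u0 H.
  - eapply path_in_mono; eauto.
  - destruct H; split; [eapply path_in_mono | apply IH]; eauto.
Qed.

Variable D : graph X.
Hypothesis HD : is_subgraph R D.

Lemma gV_eqG (g g' : term X) : eqG R g g' -> gV D g -> gV D g'.
Proof. apply HD. Qed.

Lemma gE_eqG (g g' : term X) a : eqG R g g' -> gE D g a -> gE D g' a.
Proof. apply HD. Qed.

Lemma path_in_eqG (g g' : term X) (u : word X) :
  eqG R g g' -> path_in D g u -> path_in D g' u.
Proof.
  revert g g'; induction u as [|a u IH]; simpl; intros g g' Hg H.
  - eapply gV_eqG; eauto.
  - destruct H as [H1 H2]. split; [eapply gE_eqG; eauto|].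
    apply IH with (TMul g (lterm a)); [rewrite Hg; reflexivity | exact H2].
Qed.

Lemma journey_paths_eqG l (g g' : term X) (u0 : word X) :
  eqG R g g' -> journey_paths D g u0 l -> journey_paths D g' u0 l.
Proof.
  revert g g' u0; induction l as [|[v u] l IH]; simpl; intros g g' u0 Hg H.
  - eapply path_in_eqG; eauto.
  - destruct H as [H1 H2]. split; [eapply path_in_eqG; eauto|].
    eapply IH; [|exact H2]. rewrite Hg; reflexivity.
Qed.

Lemma path_in_start (g : term X) (u : word X) : path_in D g u -> gV D g.
Proof. destruct u; simpl; [auto | intros [H _]; apply (proj1 (proj2 (proj2 HD)) _ _ H)]. Qed.

Lemma path_in_end (g : term X) (u : word X) : path_in D g u -> gV D (TMul g (wterm u)).
Proof.
  revert g; induction u as [|a u IH]; simpl; intros g H.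
  - apply gV_eqG with g; [symmetry; apply eqG_mul1r | exact H].
  - apply gV_eqG with (TMul (TMul g (lterm a)) (wterm u)); [apply eqG_mulA|].
    apply IH, H.
Qed.

Lemma journey_paths_start l (g : term X) (u0 : word X) : journey_paths D g u0 l -> gV D g.
Proof. destruct l as [|[v u] l]; simpl; intro H; eapply path_in_start; apply H. Qed.

(* [translate D g] is [g⁻¹ D]. *)
Definition translate (g : term X) : graph X :=
  {| gV := fun k => gV D (TMul g k); gE := fun k a => gE D (TMul g k) a |}.

Lemma translate_subgraph (g : term X) : is_subgraph R (translate g).
Proof.
  destruct HD as [S1 [S2 [S3 S4]]]. split; [|split; [|split]]; simpl.
  - intros k h H. apply S1. rewrite H; reflexivity.
  - intros k h a H. apply S2. rewrite H; reflexivity.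
  - intros k a H. destruct (S3 _ _ H) as [H1 H2]. split; [exact H1|].
    eapply S1; [|exact H2]. apply eqG_mulA.
  - intros k a H. eapply S2; [|exact (S4 _ _ H)]. apply eqG_mulA.
Qed.

Lemma path_in_translate (g k : term X) (u : word X) :
  path_in (translate g) k u <-> path_in D (TMul g k) u.
Proof.
  revert k; induction u as [|a u IH]; simpl; intros k; [tauto|].
  rewrite IH. split; intros [H1 H2]; split; auto; eapply path_in_eqG; eauto.
  - symmetry; apply eqG_mulA.
  - apply eqG_mulA.
Qed.

Lemma journey_paths_translate l (g k : term X) (u0 : word X) :
  journey_paths (translate g) k u0 l <-> journey_paths D (TMul g k) u0 l.
Proof.
  revert k u0; induction l as [|[v u] l IH]; simpl; intros k u0.
  - apply path_in_translate.
  - rewrite path_in_translate, IH.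
    split; intros [H1 H2]; split; auto; eapply journey_paths_eqG; eauto;
      rewrite !eqG_mulA; reflexivity.
Qed.

Lemma labels_journey_translate (g k h : term X) (w : imterm X) :
  labels_journey R (translate g) w k h <-> labels_journey R D w (TMul g k) (TMul g h).
Proof.
  unfold labels_journey. rewrite journey_paths_translate.
  split; intros [H1 H2]; split; auto.
  - rewrite eqG_mulA. apply eqG_mull, H1.
  - apply eqG_mulI with g. rewrite <- eqG_mulA. exact H1.
Qed.

End Subgraphs.

Section Closure.
Variables (X : Type) (R : imterm X -> imterm X -> Prop).

Definition cR_closed (D : graph X) : Prop := is_subgraph R D /\ cQ_closed R R D.

Local Notation cl := (cQ_closure R R).

Lemma translate_closed (D : graph X) (g : term X) : cR_closed D -> cR_closed (translate D g).
Proof.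
  intros [S C]. split; [apply translate_subgraph, S|].
  intros u v Ruv k h Hk Hh. rewrite !labels_journey_translate by exact S. apply C; auto.
Qed.

Lemma cl_ext (A : graph X) : subgraph_le A (cl A).
Proof. split; simpl; intros; apply H2; auto. Qed.

Lemma cl_min (A D : graph X) : cR_closed D -> subgraph_le A D -> subgraph_le (cl A) D.
Proof. intros [H1 H2] H3; split; simpl; intros; auto. Qed.

Lemma cl_subgraph (A : graph X) : is_subgraph R (cl A).
Proof.
  split; [|split; [|split]]; simpl.
  - intros g h Hgh Hg D S C L. eapply (proj1 S); eauto.
  - intros g h a Hgh Hg D S C L. eapply (proj1 (proj2 S)); eauto.
  - intros g a H; split; intros D S C L;
      apply (proj1 (proj2 (proj2 S)) _ _ (H D S C L)).
  - intros g a H D S C L. apply (proj2 (proj2 (proj2 S))), H; auto.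
Qed.

Lemma path_in_cl (A : graph X) (g : term X) (u : word X) :
  (forall D, cR_closed D -> subgraph_le A D -> path_in D g u) -> path_in (cl A) g u.
Proof.
  revert g; induction u as [|a u IH]; simpl; intros g H.
  - intros D S C L. apply H; [split|]; auto.
  - split.
    + intros D S C L. apply (H D (conj S C) L).
    + apply IH. intros D HD L. apply (H D HD L).
Qed.

Lemma journey_paths_cl (A : graph X) l (g : term X) (u0 : word X) :
  (forall D, cR_closed D -> subgraph_le A D -> journey_paths D g u0 l) ->
  journey_paths (cl A) g u0 l.
Proof.
  revert g u0; induction l as [|[v u] l IH]; simpl; intros g u0 H.
  - apply path_in_cl, H.
  - split.
    + apply path_in_cl. intros D HD L. apply (H D HD L).
    + apply IH. intros D HD L. apply (H D HD L).
Qed.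

Hypothesis Rsym : forall u v, R u v -> R v u.

Lemma cl_closed (A : graph X) : cR_closed (cl A).
Proof.
  split; [apply cl_subgraph|].
  assert (K : forall u v, R u v -> forall g h, gV (cl A) g -> gV (cl A) h ->
     labels_journey R (cl A) u g h -> labels_journey R (cl A) v g h).
  { intros u v Ruv g h Hg Hh [E1 J1]. split.
    - rewrite <- E1. symmetry. apply eqG_mull, eqS_eqG, R_eqS, Ruv.
    - apply journey_paths_cl. intros D HD L.
      assert (Le : subgraph_le (cl A) D) by (apply cl_min; auto).
      assert (LJ : labels_journey R D u g h)
        by (split; [exact E1 | eapply journey_paths_mono; eauto]).
      apply (proj2 HD u v Ruv g h (proj1 Le _ Hg) (proj1 Le _ Hh)), LJ. }
  intros u v Ruv g h Hg Hh. split; apply K; auto.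
Qed.

End Closure.

Section Fits.
Variables (X : Type) (R : imterm X -> imterm X -> Prop).

Local Notation cl := (cQ_closure R R).

(* [fits g K D]: the translate [g K] is contained in [D].  Quantifying over the
   representatives of the class of [g] makes [fits] respect [eqG R] outright. *)
Definition fits (g : term X) (K D : graph X) : Prop :=
  forall h, eqG R g h -> subgraph_le K (translate D h).

#[global] Instance fits_proper : Proper (eqG R ==> eq ==> eq ==> iff) fits.
Proof.
  intros g g' Hg K _ <- D _ <-. unfold fits.
  split; intros F h Hh; apply F; [rewrite Hg | rewrite <- Hg]; exact Hh.
Qed.

Lemma fits_translate (D K : graph X) (g : term X) :
  is_subgraph R D -> (fits g K D <-> subgraph_le K (translate D g)).
Proof.
  intros HD. split; [intro F; apply F; reflexivity|].
  intros [H1 H2] h Hh. split; simpl; intros.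
  - eapply gV_eqG; [exact HD | | apply H1; eauto]. rewrite Hh; reflexivity.
  - eapply gE_eqG; [exact HD | | apply H2; eauto]. rewrite Hh; reflexivity.
Qed.

Lemma fits_one (D K : graph X) : is_subgraph R D -> (fits TOne K D <-> subgraph_le K D).
Proof.
  intros HD. rewrite fits_translate by exact HD.
  split; intros [H1 H2]; split; simpl in *; intros.
  - eapply gV_eqG; [exact HD | apply eqG_mul1l | auto].
  - eapply gE_eqG; [exact HD | apply eqG_mul1l | auto].
  - eapply gV_eqG; [exact HD | symmetry; apply eqG_mul1l | auto].
  - eapply gE_eqG; [exact HD | symmetry; apply eqG_mul1l | auto].
Qed.

Lemma fits_cl (D A : graph X) (g : term X) : cR_closed R D -> (fits g (cl A) D <-> fits g A D).
Proof.
  intros HD. split; intros F h Hh.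
  - eapply subgraph_le_trans; [apply cl_ext | exact (F h Hh)].
  - apply cl_min; [apply translate_closed, HD | exact (F h Hh)].
Qed.

Definition union (A B : graph X) : graph X :=
  {| gV := fun k => gV A k \/ gV B k; gE := fun k a => gE A k a \/ gE B k a |}.

Lemma fits_union (D A B : graph X) (g : term X) :
  fits g (union A B) D <-> fits g A D /\ fits g B D.
Proof.
  unfold fits. split.
  - intro F; split; intros h Hh; destruct (F h Hh) as [H1 H2]; split; simpl in *; auto.
  - intros [FA FB] h Hh. destruct (FA h Hh) as [H1 H2], (FB h Hh) as [H3 H4].
    split; simpl; intros; destruct H; [apply H1 | apply H3 | apply H2 | apply H4]; assumption.
Qed.

Definition graph_lmul (P : term X -> Prop) (B : graph X) : graph X :=
  {| gV := fun k => exists h m, P h /\ gV B m /\ eqG R (TMul h m) k;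
     gE := fun k a => exists h m, P h /\ gE B m a /\ eqG R (TMul h m) k |}.

Lemma fits_graph_lmul (D B : graph X) (g h : term X) :
  is_subgraph R D -> (fits g (graph_lmul (eqG R h) B) D <-> fits (TMul g h) B D).
Proof.
  intros HD. rewrite !fits_translate by exact HD.
  split; intros [H1 H2]; split; simpl in *; intros.
  - eapply gV_eqG; [exact HD | | apply H1; exists h, g0; repeat split; auto; reflexivity].
    symmetry; apply eqG_mulA.
  - eapply gE_eqG; [exact HD | | apply H2; exists h, g0; repeat split; auto; reflexivity].
    symmetry; apply eqG_mulA.
  - destruct H as [h' [m [Hh [Hm He]]]]. eapply gV_eqG; [exact HD | | apply H1; eauto].
    rewrite <- He, <- Hh. apply eqG_mulA.
  - destruct H as [h' [m [Hh [Hm He]]]]. eapply gE_eqG; [exact HD | | apply H2; eauto].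
    rewrite <- He, <- Hh. apply eqG_mulA.
Qed.

Definition unit_graph : graph X := {| gV := eqG R TOne; gE := fun _ _ => False |}.

Lemma fits_unit_graph (D : graph X) (g : term X) :
  is_subgraph R D -> (fits g unit_graph D <-> gV D g).
Proof.
  intros HD. rewrite fits_translate by exact HD. split.
  - intros [H1 _]. eapply gV_eqG; [exact HD | apply eqG_mul1r | apply H1; simpl; reflexivity].
  - intros H. split; simpl; [|tauto]. intros k Hk.
    eapply gV_eqG; [exact HD | | exact H]. rewrite <- Hk. symmetry. apply eqG_mul1r.
Qed.

Definition edge_graph (x : X) : graph X :=
  {| gV := fun k => eqG R TOne k \/ eqG R (TVar x) k;
     gE := fun k a => (a = (x, false) /\ eqG R k TOne) \/ (a = (x, true) /\ eqG R k (TVar x)) |}.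

Lemma fits_edge_graph (D : graph X) (g : term X) (x : X) :
  is_subgraph R D -> (fits g (edge_graph x) D <-> gE D g (x, false)).
Proof.
  intros HD. pose proof HD as [S1 [S2 [S3 S4]]]. rewrite fits_translate by exact HD. split.
  - intros [_ H2]. eapply S2; [apply eqG_mul1r | apply H2; simpl; left; split; reflexivity].
  - intros H. destruct (S3 _ _ H) as [V1 V2]. pose proof (S4 _ _ H) as E2.
    split; simpl; intros.
    + destruct H0 as [H0|H0]; [eapply S1; [|exact V1] | eapply S1; [|exact V2]];
        rewrite <- H0; [symmetry; apply eqG_mul1r | reflexivity].
    + destruct H0 as [[-> H0]|[-> H0]]; [eapply S2; [|exact H] | eapply S2; [|exact E2]];
        rewrite H0; [symmetry; apply eqG_mul1r | reflexivity].
Qed.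

Lemma closed_graph_eq (K1 K2 : graph X) : cR_closed R K1 -> cR_closed R K2 ->
  (forall D, cR_closed R D -> (fits TOne K1 D <-> fits TOne K2 D)) -> K1 = K2.
Proof.
  intros C1 C2 H. apply subgraph_le_antisym.
  - rewrite <- fits_one by apply C2. apply H; [exact C2|].
    rewrite fits_one by apply C2. apply subgraph_le_refl.
  - rewrite <- fits_one by apply C1. apply H; [exact C1|].
    rewrite fits_one by apply C1. apply subgraph_le_refl.
Qed.

End Fits.

Arguments unit_graph {X} R.

Section Expansion.
Variables (X : Type) (R : imterm X -> imterm X -> Prop).
Hypothesis Rsym : forall u v, R u v -> R v u.

Local Notation cl := (cQ_closure R R).

Definition is_expansion_pair (A : graph X) (P : term X -> Prop) : Prop :=
  cR_closed R A /\ gV A TOne /\ exists k, P = eqG R k /\ gV A k.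

(* An element is a pair [(A, k)] with [A] a [c_R]-closed subgraph containing [1] and [k];
   [k] is stored through its class [eqG R k] so that equal pairs are Leibniz-equal. *)
Record melt := MElt {
  mgraph : graph X;
  mclass : term X -> Prop;
  mpair : is_expansion_pair mgraph mclass
}.

Definition rep (a : melt) (k : term X) : Prop := mclass a = eqG R k.

#[global] Instance rep_proper : Proper (eq ==> eqG R ==> iff) rep.
Proof.
  intros a _ <- k k' Hk. unfold rep. rewrite (eqG_ext Hk). reflexivity.
Qed.

Lemma rep_exists (a : melt) : exists k, rep a k.
Proof. destruct (mpair a) as [_ [_ [k [Hk _]]]]. exists k. exact Hk. Qed.

Lemma rep_unique (a : melt) (k k' : term X) : rep a k -> rep a k' -> eqG R k k'.
Proof.
  unfold rep. intros H H'. assert (E : eqG R k = eqG R k') by congruence.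
  rewrite E. reflexivity.
Qed.

Lemma mgraph_closed (a : melt) : cR_closed R (mgraph a).
Proof. apply (mpair a). Qed.

Lemma melt_ext (a b : melt) : mgraph a = mgraph b -> mclass a = mclass b -> a = b.
Proof.
  destruct a as [A P pa], b as [B Q pb]; simpl; intros -> ->. f_equal. apply proof_irrelevance.
Qed.

Lemma mgraph_vertices (a : melt) (ka : term X) :
  rep a ka -> gV (mgraph a) TOne /\ gV (mgraph a) ka.
Proof.
  intro Ha. destruct (mpair a) as [[[S1 _] _] [V1 [k [Hk Vk]]]].
  split; [exact V1|]. eapply S1; [|exact Vk]. exact (rep_unique Hk Ha).
Qed.

Lemma fits_mgraph_vertices (D : graph X) (a : melt) (ka g : term X) :
  is_subgraph R D -> rep a ka -> fits R g (mgraph a) D ->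
  fits R g (unit_graph R) D /\ fits R (TMul g ka) (unit_graph R) D.
Proof.
  intros HD Ha F. rewrite !fits_unit_graph by exact HD.
  destruct (mgraph_vertices Ha) as [V1 Va].
  rewrite fits_translate in F by exact HD. destruct F as [F _]. split.
  - eapply gV_eqG; [exact HD | apply eqG_mul1r | apply F, V1].
  - apply F, Va.
Qed.

Lemma melt_eq_fits (a b : melt) (ka kb : term X) : rep a ka -> rep b kb -> eqG R ka kb ->
  (forall D, cR_closed R D -> (fits R TOne (mgraph a) D <-> fits R TOne (mgraph b) D)) ->
  a = b.
Proof.
  intros Ha Hb Hab H. apply melt_ext.
  - eapply closed_graph_eq; [apply mgraph_closed | apply mgraph_closed | exact H].
  - rewrite Ha, Hb. apply eqG_ext, Hab.
Qed.

Lemma one_pair : is_expansion_pair (cl (unit_graph R)) (eqG R TOne).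
Proof.
  split; [apply cl_closed, Rsym|]. split.
  - apply cl_ext. simpl. reflexivity.
  - exists TOne. split; [reflexivity|]. apply cl_ext. simpl. reflexivity.
Qed.

Definition melt_one : melt := MElt one_pair.

Definition mul_class (a b : melt) (k : term X) : Prop :=
  exists g h, mclass a g /\ mclass b h /\ eqG R (TMul g h) k.

Lemma mul_class_rep (a b : melt) (ka kb : term X) :
  rep a ka -> rep b kb -> mul_class a b = eqG R (TMul ka kb).
Proof.
  unfold rep, mul_class; intros Ha Hb. rewrite Ha, Hb. extensionality z.
  apply propositional_extensionality. split.
  - intros [g [h [H1 [H2 H3]]]]. rewrite H1, H2. exact H3.
  - intros H. exists ka, kb. repeat split; [reflexivity | reflexivity | exact H].
Qed.

Lemma mul_pair (a b : melt) :
  is_expansion_pair (cl (union (mgraph a) (graph_lmul R (mclass a) (mgraph b)))) (mul_class a b).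
Proof.
  destruct (rep_exists a) as [ka Ha], (rep_exists b) as [kb Hb].
  destruct (mpair a) as [_ [Va _]], (mpair b) as [_ [Vb [k [Hk Vk]]]].
  split; [apply cl_closed, Rsym|]. split.
  - apply cl_ext. simpl. left. exact Va.
  - exists (TMul ka kb). split; [apply mul_class_rep; assumption|].
    apply cl_ext. simpl. right. exists ka, k.
    split; [rewrite Ha; reflexivity|]. split; [exact Vk|].
    apply eqG_mull. apply rep_unique with b; [exact Hk | exact Hb].
Qed.

Definition melt_mul (a b : melt) : melt := MElt (mul_pair a b).

Definition inv_class (a : melt) (k : term X) : Prop :=
  exists g, mclass a g /\ eqG R (TInv g) k.

Lemma inv_class_rep (a : melt) (ka : term X) : rep a ka -> inv_class a = eqG R (TInv ka).
Proof.
  unfold rep, inv_class; intros Ha. rewrite Ha. extensionality z.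
  apply propositional_extensionality. split.
  - intros [g [H1 H2]]. rewrite H1. exact H2.
  - intros H. exists ka. split; [reflexivity | exact H].
Qed.

Lemma inv_pair (a : melt) : is_expansion_pair (cl (graph_lmul R (inv_class a) (mgraph a))) (inv_class a).
Proof.
  destruct (rep_exists a) as [ka Ha]. destruct (mpair a) as [_ [Va [k [Hk Vk]]]].
  rewrite (inv_class_rep Ha). split; [apply cl_closed, Rsym|]. split.
  - apply cl_ext. simpl. exists (TInv ka), k. split; [reflexivity|]. split; [exact Vk|].
    rewrite (rep_unique Hk Ha). apply eqG_mulVl.
  - exists (TInv ka). split; [reflexivity|]. apply cl_ext. simpl.
    exists (TInv ka), TOne. split; [reflexivity|]. split; [exact Va | apply eqG_mul1r].
Qed.

Definition melt_inv (a : melt) : melt := MElt (inv_pair a).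

Lemma fm_pair (a : melt) :
  is_expansion_pair (cl (union (unit_graph R) (graph_lmul R (mclass a) (unit_graph R)))) (mclass a).
Proof.
  destruct (mpair a) as [_ [_ [k [Hk _]]]].
  split; [apply cl_closed, Rsym|]. split.
  - apply cl_ext. simpl. left. reflexivity.
  - exists k. split; [exact Hk|]. apply cl_ext. simpl. right.
    exists k, TOne. rewrite Hk. split; [reflexivity|]. split; [reflexivity | apply eqG_mul1r].
Qed.

Definition melt_fm (a : melt) : melt := MElt (fm_pair a).

Lemma rep_one : rep melt_one TOne.
Proof. reflexivity. Qed.

Lemma rep_mul (a b : melt) (ka kb : term X) : rep a ka -> rep b kb -> rep (melt_mul a b) (TMul ka kb).
Proof. apply mul_class_rep. Qed.

Lemma rep_inv (a : melt) (ka : term X) : rep a ka -> rep (melt_inv a) (TInv ka).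
Proof. apply inv_class_rep. Qed.

Lemma rep_fm (a : melt) (ka : term X) : rep a ka -> rep (melt_fm a) ka.
Proof. auto. Qed.

Section FitsOperations.
Variable D : graph X.
Hypothesis HD : cR_closed R D.

Lemma fits_melt_one (g : term X) : fits R g (mgraph melt_one) D <-> fits R g (unit_graph R) D.
Proof. apply fits_cl, HD. Qed.

Lemma fits_melt_mul (a b : melt) (ka g : term X) : rep a ka ->
  fits R g (mgraph (melt_mul a b)) D <-> fits R g (mgraph a) D /\ fits R (TMul g ka) (mgraph b) D.
Proof.
  intros Ha. simpl. rewrite fits_cl, fits_union, Ha, fits_graph_lmul by apply HD. reflexivity.
Qed.

Lemma fits_melt_inv (a : melt) (ka g : term X) : rep a ka ->
  fits R g (mgraph (melt_inv a)) D <-> fits R (TMul g (TInv ka)) (mgraph a) D.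
Proof.
  intros Ha. simpl. rewrite fits_cl, (inv_class_rep Ha), fits_graph_lmul by apply HD.
  reflexivity.
Qed.

Lemma fits_melt_fm (a : melt) (ka g : term X) : rep a ka ->
  fits R g (mgraph (melt_fm a)) D <-> fits R g (unit_graph R) D /\ fits R (TMul g ka) (unit_graph R) D.
Proof.
  intros Ha. simpl. rewrite fits_cl, fits_union, Ha, fits_graph_lmul by apply HD. reflexivity.
Qed.

End FitsOperations.

#[local] Hint Resolve rep_one rep_mul rep_inv rep_fm : melt_rep.

Ltac melt_fits_simpl :=
  repeat first
    [ erewrite fits_melt_mul by eauto with melt_rep
    | erewrite fits_melt_inv by eauto with melt_rep
    | erewrite fits_melt_fm by eauto with melt_rep
    | rewrite fits_melt_one by assumption ].

(* Elements are compared through their classes and the closed graphs they fit into;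
   fitting a product, inverse or [fm] reduces to fitting its arguments at shifted points. *)
Ltac melt_eq :=
  eapply melt_eq_fits;
  [ eauto 10 with melt_rep | eauto 10 with melt_rep | group_simpl; reflexivity
  | intros ?D ?HD; melt_fits_simpl; group_simpl ].

Lemma melt_mulA (a b c : melt) : melt_mul a (melt_mul b c) = melt_mul (melt_mul a b) c.
Proof.
  destruct (rep_exists a) as [ka Ha], (rep_exists b) as [kb Hb], (rep_exists c) as [kc Hc].
  melt_eq. tauto.
Qed.

Lemma melt_mul1l (a : melt) : melt_mul melt_one a = a.
Proof.
  destruct (rep_exists a) as [ka Ha]. melt_eq.
  split; [tauto|]. intro F. split; [|exact F].
  apply (fits_mgraph_vertices (proj1 HD) Ha F).
Qed.

Lemma melt_mul1r (a : melt) : melt_mul a melt_one = a.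
Proof.
  destruct (rep_exists a) as [ka Ha]. melt_eq.
  split; [tauto|]. intro F. destruct (fits_mgraph_vertices (proj1 HD) Ha F) as [_ V].
  rewrite eqG_mul1l in V. tauto.
Qed.

Lemma melt_inv_l (a : melt) : melt_mul (melt_mul a (melt_inv a)) a = a.
Proof. destruct (rep_exists a) as [ka Ha]. melt_eq. tauto. Qed.

Lemma melt_inv_r (a : melt) : melt_mul (melt_mul (melt_inv a) a) (melt_inv a) = melt_inv a.
Proof. destruct (rep_exists a) as [ka Ha]. melt_eq. tauto. Qed.

Lemma melt_mulV_idem (a : melt) :
  melt_mul (melt_mul a (melt_inv a)) (melt_mul a (melt_inv a)) = melt_mul a (melt_inv a).
Proof. destruct (rep_exists a) as [ka Ha]. melt_eq. tauto. Qed.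

Lemma rep_idem (e : melt) (ke : term X) : rep e ke -> melt_mul e e = e -> eqG R ke TOne.
Proof.
  intros He Hee. assert (H : rep (melt_mul e e) (TMul ke ke)) by auto with melt_rep.
  rewrite Hee in H. apply eqG_mulI with ke. rewrite eqG_mul1r. exact (rep_unique H He).
Qed.

Lemma melt_idem_comm (e f : melt) :
  melt_mul e e = e -> melt_mul f f = f -> melt_mul e f = melt_mul f e.
Proof.
  destruct (rep_exists e) as [ke He], (rep_exists f) as [kf Hf]. intros Ie If.
  pose proof (rep_idem He Ie). pose proof (rep_idem Hf If). melt_eq. tauto.
Qed.

Lemma melt_fm_sigma (s : melt) :
  exists e, melt_mul e e = e /\ melt_mul e (melt_fm s) = melt_mul e s.
Proof.
  exists (melt_mul s (melt_inv s)). split; [apply melt_mulV_idem|].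
  destruct (rep_exists s) as [ks Hs]. melt_eq.
  split; intros [[F _] _]; destruct (fits_mgraph_vertices (proj1 HD) Hs F) as [V1 V2];
    rewrite eqG_mul1l in V2; tauto.
Qed.

Lemma melt_fm_max (s t : melt) :
  (exists e, melt_mul e e = e /\ melt_mul e t = melt_mul e s) ->
  exists e, melt_mul e e = e /\ t = melt_mul e (melt_fm s).
Proof.
  intros [e [Ie Et]].
  destruct (rep_exists e) as [ke He], (rep_exists s) as [ks Hs], (rep_exists t) as [kt Ht].
  pose proof (rep_idem He Ie) as Ke.
  assert (Kts : eqG R kt ks).
  { assert (H1 : rep (melt_mul e t) (TMul ke kt)) by auto with melt_rep.
    rewrite Et in H1. pose proof (rep_unique H1 (rep_mul He Hs)) as H.
    rewrite Ke, !eqG_mul1l in H. exact H. }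
  exists (melt_mul t (melt_inv t)). split; [apply melt_mulV_idem|].
  rewrite Kts in Ht. melt_eq.
  split; [intro F | intros [[F _] _]]; destruct (fits_mgraph_vertices (proj1 HD) Ht F) as [V1 V2];
    rewrite eqG_mul1l in V2; tauto.
Qed.

Definition expansion : FInvMonoid :=
  {| fcar := melt; fmul := melt_mul; fone := melt_one; finv := melt_inv; fm := melt_fm;
     fmulA := melt_mulA; fmul1l := melt_mul1l; fmul1r := melt_mul1r;
     finv_l := melt_inv_l; finv_r := melt_inv_r; fidem_comm := melt_idem_comm;
     fm_sigma := melt_fm_sigma; fm_max := melt_fm_max |}.

End Expansion.

Arguments melt_one {X R} Rsym.
Arguments expansion {X R} Rsym.
Arguments rep_one {X R} Rsym.

Section Evaluation.
Variables (X : Type) (R : imterm X -> imterm X -> Prop).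
Hypothesis Rsym : forall u v, R u v -> R v u.

Local Notation cl := (cQ_closure R R).

Lemma generator_pair (x : X) : is_expansion_pair R (cl (edge_graph R x)) (eqG R (TVar x)).
Proof.
  split; [apply cl_closed, Rsym|]. split.
  - apply cl_ext. simpl. left. reflexivity.
  - exists (TVar x). split; [reflexivity|]. apply cl_ext. simpl. right. reflexivity.
Qed.

Definition generator (x : X) : expansion Rsym := MElt (generator_pair x).

Lemma rep_eval (t : term X) : rep (eval generator t) t.
Proof.
  induction t; cbn [eval].
  - reflexivity.
  - apply (rep_one Rsym).
  - apply (rep_mul Rsym); assumption.
  - apply (rep_inv Rsym); assumption.
  - rewrite (eqG_fm R t). apply (rep_fm Rsym); assumption.
Qed.

Variable D : graph X.
Hypothesis HD : cR_closed R D.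

Lemma fits_eval_letter (g : term X) (a : letter X) :
  fits R g (mgraph (eval generator (lterm a))) D <-> gE D g a.
Proof.
  destruct HD as [[S1 [S2 [S3 S4]]] _].
  destruct a as [x []]; cbn [lterm fst snd eval finv expansion].
  - rewrite (fits_melt_inv Rsym HD (ka := TVar x)) by reflexivity.
    simpl. rewrite fits_cl, fits_edge_graph by apply HD. split; intro H.
    + eapply S2; [|exact (S4 _ _ H)]. simpl. group_simpl. reflexivity.
    + exact (S4 _ _ H).
  - simpl. rewrite fits_cl, fits_edge_graph by apply HD. reflexivity.
Qed.

Lemma fits_eval_path (u : word X) (g : term X) :
  fits R g (mgraph (eval generator (wterm u))) D <-> path_in D g u.
Proof.
  revert g; induction u as [|a u IH]; intros g; cbn [eval wterm fone fmul expansion].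
  - rewrite (fits_melt_one Rsym), fits_unit_graph by apply HD. reflexivity.
  - rewrite (fits_melt_mul Rsym HD _ _ (rep_eval (lterm a))), fits_eval_letter, IH. reflexivity.
Qed.

Lemma fits_eval_journey l (u0 : word X) (g : term X) :
  fits R g (mgraph (eval generator (imterm_aux u0 l))) D <-> journey_paths D g u0 l.
Proof.
  revert u0 g; induction l as [|[v u] l IH]; intros u0 g; cbn [eval imterm_aux fmul fm expansion].
  - apply fits_eval_path.
  - rewrite (fits_melt_mul Rsym HD _ _ (rep_eval (wterm u0))),
      (fits_melt_mul Rsym HD _ _ (rep_fm Rsym (rep_eval (wterm v)))),
      (fits_melt_fm Rsym HD _ (rep_eval (wterm v))), !fits_unit_graph, fits_eval_path, IH
      by apply HD.
    simpl. split; [tauto|]. intros [Hu Hl].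
    pose proof (path_in_end (proj1 HD) _ _ Hu). pose proof (journey_paths_start (proj1 HD) _ _ _ Hl).
    tauto.
Qed.

End Evaluation.

Arguments generator {X R} Rsym x.
Arguments rep_eval {X R} Rsym t.

Section Presentation.
Variables (X : Type) (R : imterm X -> imterm X -> Prop).
Hypothesis Rsym : forall u v, R u v -> R v u.

(* The journey of [p] from [1] lies in the closed graph of [p]; closedness transfers it
   to the journey of [q], which then fits into that graph. *)
Lemma R_eval_le (p q : imterm X) : R p q ->
  subgraph_le (mgraph (eval (generator Rsym) (imt q))) (mgraph (eval (generator Rsym) (imt p))).
Proof.
  intro Rpq. set (K := mgraph (eval (generator Rsym) (imt p))).
  assert (HK : cR_closed R K) by apply mgraph_closed.
  destruct (mgraph_vertices (rep_eval Rsym (imt p))) as [V1 Vp].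
  rewrite <- fits_one by apply HK. apply (fits_eval_journey Rsym HK).
  apply (proj2 HK p q Rpq TOne (imt p) V1 Vp). split; [apply eqG_mul1l|].
  apply (fits_eval_journey Rsym HK). rewrite fits_one by apply HK. apply subgraph_le_refl.
Qed.

Lemma generator_respects_R (p q : imterm X) :
  R p q -> eval (generator Rsym) (imt p) = eval (generator Rsym) (imt q).
Proof.
  intro Rpq. apply melt_ext.
  - apply subgraph_le_antisym; apply R_eval_le; auto.
  - rewrite (rep_eval Rsym (imt p)), (rep_eval Rsym (imt q)).
    apply eqG_ext, eqS_eqG, R_eqS, Rpq.
Qed.

Lemma cR_closed_cS_closed (D : graph X) : cR_closed R D -> cQ_closed R (QS R) D.
Proof.
  intros HD u v Quv g h _ _.
  assert (Ev : eval (generator Rsym) (imt u) = eval (generator Rsym) (imt v))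
    by (apply (Quv (expansion Rsym)), generator_respects_R).
  unfold labels_journey.
  rewrite <- (fits_eval_journey Rsym HD (snd u)), <- (fits_eval_journey Rsym HD (snd v)).
  change (imterm_aux (fst u) (snd u)) with (imt u).
  change (imterm_aux (fst v) (snd v)) with (imt v).
  rewrite Ev, (eqS_eqG Quv). reflexivity.
Qed.

Lemma cR_closed_iff_cS_closed (D : graph X) :
  is_subgraph R D -> (cQ_closed R R D <-> cQ_closed R (QS R) D).
Proof.
  intros HD. split.
  - intro C. apply cR_closed_cS_closed. split; assumption.
  - intros C u v Ruv. apply C, R_eqS, Ruv.
Qed.

End Presentation.

Theorem mainTheorem10 (X : Type) (R : imterm X -> imterm X -> Prop)
  (Rsym : forall u v, R u v -> R v u) :
  forall D : graph X, is_subgraph R D ->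
    same_graph (cQ_closure R R D) (cQ_closure R (QS R) D).
Proof.
  intros D _.
  split; simpl; intros; split; intros H D' S C L;
    apply H; try apply (cR_closed_iff_cS_closed Rsym S); assumption.
Qed.
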